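(* Let $\varepsilon>0$, let $u,v\in C(\bar\Omega)$ and $f,\tilde f:\Omega_\varepsilon\to\mathbb{R}$ satisfy, at every point of $\Omega_\varepsilon$, $$a^-_\varepsilon(\beta)S^-_\varepsilon u-a^+_\varepsilon(\beta)S^+_\varepsilon u\le f\le\tilde f\le a^-_\varepsilon(\beta)S^-_\varepsilon v-a^+_\varepsilon(\beta)S^+_\varepsilon v.$$ Suppose in addition that (i) $f<\tilde f$ on $\Omega_\varepsilon$, or (ii) $f\le0$ on $\Omega_\varepsilon$, or (iii) $\tilde f\ge0$ on $\Omega_\varepsilon$. Then $$\max_{\bar\Omega}(u-v)=\max_{\bar\Omega\setminus\Omega_\varepsilon}(u-v).$$
   Context: Setting: $\Omega\subseteq\mathbb{R}^n$ is a bounded open connected set with $C^1$ boundary, $\Gamma_D\subseteq\partial\Omega$ is a nonempty closed subset (the Dirichlet part of the boundary), $\beta\in\mathbb{R}$. Notation: $\Omega_\varepsilon:=\{x\in\bar\Omega:\operatorname{dist}(x,\Gamma_D)>\varepsilon\}$; for a function $w$ and $x\in\Omega_\varepsilon$, $w^\varepsilon(x):=\max_{\bar B(x,\varepsilon)\cap\bar\Omega}w$, $w_\varepsilon(x):=\min_{\bar B(x,\varepsilon)\cap\bar\Omega}w$, $S^+_\varepsilon w(x):=\frac1\varepsilon(w^\varepsilon(x)-w(x))$, $S^-_\varepsilon w(x):=\frac1\varepsilon(w(x)-w_\varepsilon(x))$. Coefficients: for $\beta\ne0$, $a^+_\varepsilon(\beta):=\frac{\beta}{e^{\varepsilon\beta}-1}$,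 $a^-_\varepsilon(\beta):=\frac{\beta}{1-e^{-\varepsilon\beta}}$; $a^\pm_\varepsilon(0):=1/\varepsilon$. *)

From HB Require Import structures.
From mathcomp Require Import all_boot all_order all_algebra.
From mathcomp Require Import all_classical all_reals all_analysis.
Set Implicit Arguments. Unset Strict Implicit. Unset Printing Implicit Defensive.
Import Order.TTheory GRing.Theory Num.Theory.
Import numFieldNormedType.Exports.
Local Open Scope classical_set_scope.
Local Open Scope ring_scope.

Section Defs.
Variable R : realType.
Variable n : nat.
Notation pt := 'rV[R]_n.+1.

(* Euclidean norm (the library norm on 'rV is the sup norm) *)
Definition enorm (x : pt) : R := Num.sqrt (\sum_(i < n.+1) (x 0 i) ^+ 2).

Definition dist_set (A : set pt) (x : pt) : R := inf [set enorm (x - y) | y in A].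

Definition bdry (Om : set pt) : set pt := closure Om `\` interior Om.

Definition C1fun (g : 'rV[R]_n -> R) : Prop :=
  (forall z, differentiable g z) /\ (forall v, continuous (fun z => 'D_v g z)).

(* Omega has C^1 boundary: near every boundary point, after a rigid motion,
   Omega is the subgraph of a C^1 function of the first n coordinates. *)
Definition C1_boundary (Om : set pt) : Prop :=
  forall x, bdry Om x ->
    exists (r : R) (Q : 'M[R]_n.+1) (g : 'rV[R]_n -> R),
      [/\ 0 < r, Q^T *m Q = 1%:M, C1fun g &
        forall y, enorm (y - x) < r ->
          (Om y <-> let z := (y - x) *m Q in
                    z 0 ord_max < g (\row_(i < n) z 0 (lift ord_max i)))].

Definition Om_eps (Om GD : set pt) (eps : R) : set pt :=
  [set x | closure Om x /\ eps < dist_set GD x].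

Definition cball_cl (Om : set pt) (x : pt) (eps : R) : set pt :=
  [set y | closure Om y /\ enorm (y - x) <= eps].

(* max / min of w over closed ball cap closure (compact, so sup/inf are attained) *)
Definition wsup (Om : set pt) (eps : R) (w : pt -> R) (x : pt) : R :=
  sup [set w y | y in cball_cl Om x eps].
Definition winf (Om : set pt) (eps : R) (w : pt -> R) (x : pt) : R :=
  inf [set w y | y in cball_cl Om x eps].

Definition Splus (Om : set pt) (eps : R) (w : pt -> R) (x : pt) : R :=
  (wsup Om eps w x - w x) / eps.
Definition Sminus (Om : set pt) (eps : R) (w : pt -> R) (x : pt) : R :=
  (w x - winf Om eps w x) / eps.
End Defs.

Definition a_plus (R : realType) (eps beta : R) : R :=
  if beta == 0 then eps^-1 else beta / (expR (eps * beta) - 1).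
Definition a_minus (R : realType) (eps beta : R) : R :=
  if beta == 0 then eps^-1 else beta / (1 - expR (- (eps * beta))).

Definition Lop (R : realType) (n : nat) (Om : set 'rV[R]_n.+1) (eps beta : R)
  (w : 'rV[R]_n.+1 -> R) (x : 'rV[R]_n.+1) : R :=
  a_minus eps beta * Sminus Om eps w x - a_plus eps beta * Splus Om eps w x.

From HB Require Import structures.
From mathcomp Require Import all_boot all_order all_algebra.
From mathcomp Require Import all_classical all_reals all_analysis.
From mathcomp Require Import ring lra.
Import Order.TTheory GRing.Theory Num.Theory.
Import numFieldNormedType.Exports.
Local Open Scope classical_set_scope.
Local Open Scope ring_scope.

(* At a point x of Om_eps where u - v attains its maximum M, every point of the
   eps-ball B around x gives u - v <= M, hence sup_B u <= sup_B v + M and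
   inf_B u <= inf_B v + M.  Since a^-, a^+ > 0, eps (Lop u - Lop v)(x) is a positive
   combination of the two defects, while Lop u <= f <= ft <= Lop v makes it <= 0:
   both inequalities are equalities and f x = ft x.  This excludes case (i).
   In case (ii), among the maximum points of u - v those maximising u form a
   nonempty closed set; at such a point of Om_eps the sup of u over B is attained at a
   maximum point of u - v, hence equals u x, and f <= 0 then forces u and v to be
   constant on B.  If the whole set lay in Om_eps it would be open in the closure of
   the connected set Om, hence equal to it, and would meet Gamma_D, where the
   distance to Gamma_D vanishes.  Case (iii) is case (ii) for (-v, -u) and -beta. *)

Lemma connected_closure_clopen (T : topologicalType) (A B : set T) :
  connected A -> closed B -> B !=set0 -> B `<=` closure A ->
  (forall x, B x -> nbhs x [set y | closure A y -> B y]) -> B = closure A.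
Proof.
move=> cA cB B0 BA Bloc; apply: (connected_closure cA) => //.
- exists [set y | closure A y -> B y]°; first exact: open_interior.
  apply/seteqP; split=> [y By | y [Ay /interior_subset]]; last exact.
  by split; [exact: BA | exact: Bloc].
- exists B => //; apply/seteqP; split=> [y By | y []] //.
  by split=> //; exact: BA.
Qed.

Lemma closed_within_level {T : topologicalType} {R : realType} {K : set T}
    {g : T -> R} (c : R) :
  closed K -> {within K, continuous g} -> closed [set x | K x /\ g x = c].
Proof.
move=> cK cg.
have /closed_subspaceP [V cV VE] :=
  (continuous_closedP (from_subspace K g)).1 cg _ (@closed_eq R c).
have -> : [set x | K x /\ g x = c] = V `&` K.
  by rewrite VE; apply/seteqP; split=> x /= [].
exact: closedI.
Qed.

Lemma sup_eq_max (R : realType) (S : set R) (a : R) : S a -> ubound S a -> sup S = a.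
Proof.
move=> Sa Sa_ub; apply/le_anti/andP; split; first by apply: ge_sup; [exists a|].
by apply: ub_le_sup => //; exists a.
Qed.

Lemma closure_bounded_set (R : realType) (V : normedModType R) (A : set V) :
  bounded_set A -> bounded_set (closure A).
Proof.
move=> [M [Mreal AM]]; exists (M + 1); split; first by rewrite realD ?real1.
move=> r Mr y /= Ay; apply: (le_trans _ (ltW Mr)).
suff : [set z : V | `|z| <= M + 1] y by [].
have : closed [set z : V | `|z| <= M + 1].
  exact: (continuous_closedP _).1 (@norm_continuous R V) _ (@closed_le R (M + 1)).
move=> /closure_id ->; apply: closureS Ay.
by apply: AM; rewrite ltrDl.
Qed.

Section EuclideanBalls.
Context {R : realType} {n : nat}.
Local Notation pt := 'rV[R]_n.+1.
Implicit Types (x y z : pt) (e : R).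

Lemma enorm_ge0 z : 0 <= enorm z.
Proof. exact: sqrtr_ge0. Qed.

Lemma enorm0 : enorm (0 : pt) = 0.
Proof. by rewrite /enorm big1 ?sqrtr0 // => i _; rewrite mxE expr0n. Qed.

Lemma enorm_le_sqr z e : 0 <= e ->
  (enorm z <= e) = (\sum_(i < n.+1) (z 0 i) ^+ 2 <= e ^+ 2).
Proof.
move=> e0; rewrite /enorm -[in LHS](ger0_norm e0) -sqrtr_sqr ler_sqrt //.
exact: sqr_ge0.
Qed.

Lemma closed_enorm_le x e : 0 <= e -> closed [set y | enorm (y - x) <= e].
Proof.
move=> e0.
have -> : [set y | enorm (y - x) <= e] =
    (fun y => \sum_(i < n.+1) ((y - x) 0 i) ^+ 2) @^-1` [set r | r <= e ^+ 2].
  by apply/seteqP; split=> y /=; rewrite enorm_le_sqr.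
apply: (continuous_closedP _).1; last exact: closed_le.
apply: (@continuous_big _ _ +%R 0 xpredT); first exact: add_continuous.
move=> i _ y.
have coord_i : (fun z : pt => (z - x) 0 i) @ y --> (y - x) 0 i.
  exact: cvg_comp (cvgB cvg_id (cvg_cst x)) (@coord_continuous R 1 n.+1 0 i _).
rewrite (_ : (fun z : pt => _) = fun z => (z - x) 0 i * (z - x) 0 i).
  exact: (cvgM coord_i coord_i).
by apply/funext => z; rewrite expr2.
Qed.

(* The sup-norm ball of radius [e / (n + 1)] is inside the Euclidean one of radius [e]. *)
Lemma nbhs_enorm_le x {e} : 0 < e -> nbhs x [set y | enorm (y - x) <= e].
Proof.
move=> e0; apply/nbhs_ballP; exists (e / n.+1%:R) => [|y]; first by rewrite /= divr_gt0.
rewrite -ball_normE /= distrC => xy; rewrite enorm_le_sqr ?(ltW e0) //.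
set N : R := n.+1%:R.
have N1 : 1 <= N by rewrite ler1n.
apply: (@le_trans _ _ (\sum_(i < n.+1) (e / N) ^+ 2)).
  apply: ler_sum => i _; rewrite -real_normK ?num_real //.
  apply: lerXn2r; rewrite ?nnegrE ?normr_ge0 ?divr_ge0 ?ltW //.
  apply: le_lt_trans xy; rewrite [leRHS]/Num.Def.normr /= mx_normrE.
  by apply/bigmax_geP; right; exists (0, i).
rewrite sumr_const card_ord -/N -mulr_natr -/N.
have -> : (e / N) ^+ 2 * N = e ^+ 2 / N by field; lra.
by rewrite ler_pdivrMr ?ler_peMr ?sqr_ge0 //; lra.
Qed.
End EuclideanBalls.

Lemma a_plus_gt0 {R : realType} {e : R} (b : R) : 0 < e -> 0 < a_plus e b.
Proof.
move=> e0; rewrite /a_plus; case: eqP => [_|/eqP b0]; first by rewrite invr_gt0.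
case: (ltgtP b 0) => hb; last by move: b0; rewrite hb eqxx.
- have : expR (e * b) < 1 by rewrite expR_lt1 pmulr_rlt0.
  by move=> h; rewrite nmulr_rgt0 // invr_lt0 subr_lt0.
- have : 1 < expR (e * b) by rewrite expR_gt1 pmulr_rgt0.
  by move=> h; rewrite divr_gt0 // subr_gt0.
Qed.

Lemma a_plusN {R : realType} (e b : R) : a_plus e (- b) = a_minus e b.
Proof.
rewrite /a_plus /a_minus oppr_eq0; case: eqP => // _.
by rewrite mulrN -opprB invrN mulrN mulNr opprK.
Qed.

Lemma a_minusN {R : realType} (e b : R) : a_minus e (- b) = a_plus e b.
Proof. by rewrite -a_plusN opprK. Qed.

Lemma a_minus_gt0 {R : realType} {e : R} (b : R) : 0 < e -> 0 < a_minus e b.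
Proof. by rewrite -a_plusN; exact: a_plus_gt0. Qed.

Section BallExtrema.
Context {R : realType} {n : nat} {Om : set 'rV[R]_n.+1} {eps : R}.
Local Notation pt := 'rV[R]_n.+1.
Implicit Types (g : pt -> R) (x y : pt).

Lemma winfE g x : winf Om eps g x = - wsup Om eps (fun y => - g y) x.
Proof. by rewrite /winf /wsup /inf image_comp. Qed.

Lemma wsupN g x : wsup Om eps (fun y => - g y) x = - winf Om eps g x.
Proof. by rewrite winfE opprK. Qed.

Lemma winfN g x : winf Om eps (fun y => - g y) x = - wsup Om eps g x.
Proof. by rewrite winfE; under eq_fun do rewrite opprK. Qed.

Lemma LopN beta g x :
  Lop Om eps (- beta) (fun y => - g y) x = - Lop Om eps beta g x.
Proof.
rewrite /Lop /Sminus /Splus wsupN winfN a_plusN a_minusN; ring.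
Qed.

Lemma Lop_scale beta g x : eps != 0 ->
  eps * Lop Om eps beta g x =
  a_minus eps beta * (g x - winf Om eps g x) - a_plus eps beta * (wsup Om eps g x - g x).
Proof. by move=> eps_neq0; rewrite /Lop /Sminus /Splus; field. Qed.

Lemma not_Om_eps_GD {GD : set pt} {x} : 0 < eps -> GD x -> ~ Om_eps Om GD eps x.
Proof.
move=> eps_gt0 GDx [_]; apply/negP; rewrite -leNgt; apply: le_trans (ltW eps_gt0).
rewrite /dist_set -(@enorm0 R n) -(subrr x); apply: ge_inf; last by exists x.
by exists 0 => _ [y _ <-]; exact: enorm_ge0.
Qed.
End BallExtrema.

Section CompactBalls.
Context {R : realType} {n : nat} {Om : set 'rV[R]_n.+1} {eps : R}.
Hypotheses (Om_bounded : bounded_set Om) (eps_ge0 : 0 <= eps).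
Local Notation pt := 'rV[R]_n.+1.
Local Notation cball x := (cball_cl Om x eps).
Implicit Types (g : pt -> R) (x y : pt).

Lemma compact_closure_Om : compact (closure Om).
Proof.
apply: bounded_closed_compact; last exact: closed_closure.
exact: closure_bounded_set.
Qed.

Lemma compact_cball x : compact (cball x).
Proof.
apply: subclosed_compact compact_closure_Om _; last by move=> y [].
by apply: closedI; [exact: closed_closure | exact: closed_enorm_le].
Qed.

Lemma cball_center {x} : closure Om x -> cball x x.
Proof. by move=> Ox; split; rewrite // subrr enorm0. Qed.

Lemma cball_argmax {g x y} : {within closure Om, continuous g} -> cball x y ->
  exists2 c, cball x c & forall z, cball x z -> g z <= g c.
Proof.
move=> cg xy.
have [c xc c_max] := EVT_max_rV (ex_intro _ y xy) (compact_cball x)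
  (continuous_subspaceW (fun z (xz : cball x z) => xz.1) cg).
by exists c; [rewrite inE in xc | move=> z xz; apply: c_max; rewrite inE].
Qed.

Lemma wsup_attained {g x} : {within closure Om, continuous g} -> closure Om x ->
  exists2 c, cball x c & wsup Om eps g x = g c.
Proof.
move=> cg Ox; have [c xc c_max] := cball_argmax cg (cball_center Ox).
by exists c => //; apply: sup_eq_max; [exists c | move=> _ [z xz <-]; exact: c_max].
Qed.

Lemma wsup_ge {g x y} : {within closure Om, continuous g} -> cball x y ->
  g y <= wsup Om eps g x.
Proof.
move=> cg xy; have [c _ c_max] := cball_argmax cg xy.
by apply: ub_le_sup; [exists (g c) => _ [z xz <-]; exact: c_max | exists y].
Qed.

Lemma winf_le {g x y} : {within closure Om, continuous g} -> cball x y ->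
  winf Om eps g x <= g y.
Proof.
move=> cg xy; rewrite winfE lerNl; apply: (wsup_ge _ xy) => z.
by apply: cvgN; exact: cg.
Qed.
End CompactBalls.

Section MaximumPoint.
Context {R : realType} {n : nat} {Om GD : set 'rV[R]_n.+1} {beta eps : R}.
Context {u v f ft : 'rV[R]_n.+1 -> R}.
Hypotheses (Om_bounded : bounded_set Om) (eps_gt0 : 0 < eps).
Hypotheses (cu : {within closure Om, continuous u}) (cv : {within closure Om, continuous v}).
Hypothesis sub_super : forall x, Om_eps Om GD eps x ->
  Lop Om eps beta u x <= f x /\ f x <= ft x /\ ft x <= Lop Om eps beta v x.
Context {x : 'rV[R]_n.+1}.
Hypotheses (Ox : Om_eps Om GD eps x)
  (x_max : forall y, closure Om y -> u y - v y <= u x - v x).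
Local Notation M := (u x - v x).
Local Notation cball y := (cball_cl Om x eps y).

Lemma max_point_equalities :
  [/\ winf Om eps u x = winf Om eps v x + M,
      wsup Om eps u x = wsup Om eps v x + M & f x = ft x].
Proof.
have eps_ge0 := ltW eps_gt0; have x_x := cball_center eps_ge0 Ox.1.
have sup_le : wsup Om eps u x <= wsup Om eps v x + M.
  apply: ge_sup; first by exists (u x), x.
  move=> _ [y xy <-]; have := x_max y xy.1; have := wsup_ge Om_bounded eps_ge0 cv xy.
  lra.
have inf_ge : winf Om eps u x - M <= winf Om eps v x.
  apply: lb_le_inf; first by exists (v x), x.
  move=> _ [y xy <-]; have := x_max y xy.1; have := winf_le Om_bounded eps_ge0 cu xy.
  lra.
have [Lu_f [f_ft ft_Lv]] := sub_super x Ox.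
have Lu := Lop_scale beta u x (lt0r_neq0 eps_gt0).
have Lv := Lop_scale beta v x (lt0r_neq0 eps_gt0).
have am := a_minus_gt0 beta eps_gt0; have ap := a_plus_gt0 beta eps_gt0.
set Am := a_minus eps beta in Lu Lv am; set Ap := a_plus eps beta in Lu Lv ap.
have P1 : 0 <= Am * (M - (winf Om eps u x - winf Om eps v x)).
  by apply: mulr_ge0; lra.
have P2 : 0 <= Ap * (M - (wsup Om eps u x - wsup Om eps v x)).
  by apply: mulr_ge0; lra.
have defects : Am * (M - (winf Om eps u x - winf Om eps v x)) +
               Ap * (M - (wsup Om eps u x - wsup Om eps v x)) =
               eps * Lop Om eps beta u x - eps * Lop Om eps beta v x.
  by rewrite Lu Lv; ring.
have Lu_f' : eps * Lop Om eps beta u x <= eps * f x by rewrite ler_pM2l.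
have f_ft' : eps * f x <= eps * ft x by rewrite ler_pM2l.
have ft_Lv' : eps * ft x <= eps * Lop Om eps beta v x by rewrite ler_pM2l.
have /eqP : Am * (M - (winf Om eps u x - winf Om eps v x)) = 0 by lra.
have /eqP : Ap * (M - (wsup Om eps u x - wsup Om eps v x)) = 0 by lra.
rewrite !mulf_eq0 (gt_eqF am) (gt_eqF ap) /= => /eqP ? /eqP ?.
split; [lra | lra | apply: (mulfI (lt0r_neq0 eps_gt0)); lra].
Qed.

Lemma max_point_flat : f x <= 0 -> wsup Om eps u x <= u x ->
  forall y, cball y -> u y = u x /\ v y = v x.
Proof.
move=> fx_le0 su_le y xy.
have eps_ge0 := ltW eps_gt0; have x_x := cball_center eps_ge0 Ox.1.
have [iu_iv su_sv _] := max_point_equalities.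
have su_ux : wsup Om eps u x = u x.
  by apply/le_anti; rewrite su_le (wsup_ge Om_bounded eps_ge0 cu x_x).
have iu_ux : winf Om eps u x = u x.
  have [Lu_f _] := sub_super x Ox.
  have : eps * Lop Om eps beta u x <= 0 by rewrite pmulr_rle0 //; lra.
  rewrite Lop_scale ?(lt0r_neq0 eps_gt0) // su_ux subrr mulr0 subr0.
  rewrite pmulr_rle0 ?(a_minus_gt0 beta eps_gt0) // subr_le0 => ux_le.
  by apply/le_anti; rewrite ux_le (winf_le Om_bounded eps_ge0 cu x_x).
have := wsup_ge Om_bounded eps_ge0 cu xy; have := winf_le Om_bounded eps_ge0 cu xy.
have := wsup_ge Om_bounded eps_ge0 cv xy; have := winf_le Om_bounded eps_ge0 cv xy.
lra.
Qed.
End MaximumPoint.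

Section NonpositiveRightHandSide.
Context {R : realType} {n : nat} {Om GD : set 'rV[R]_n.+1} {beta eps : R}.
Context {u v f ft : 'rV[R]_n.+1 -> R}.
Hypotheses (Om_bounded : bounded_set Om) (Om_connected : connected Om).
Hypotheses (GD_closure : GD `<=` closure Om) (GD_neq0 : GD !=set0) (eps_gt0 : 0 < eps).
Hypotheses (cu : {within closure Om, continuous u}) (cv : {within closure Om, continuous v}).
Hypothesis sub_super : forall x, Om_eps Om GD eps x ->
  Lop Om eps beta u x <= f x /\ f x <= ft x /\ ft x <= Lop Om eps beta v x.

Lemma within_continuousB : {within closure Om, continuous (fun x => u x - v x)}.
Proof. by move=> x; apply: cvgB; [exact: cu | exact: cv]. Qed.

Lemma argmax_exists : exists2 x, closure Om x &
  forall y, closure Om y -> u y - v y <= u x - v x.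
Proof.
have [g GDg] := GD_neq0.
have [x Ox x_max] := EVT_max_rV (ex_intro _ g (GD_closure _ GDg))
  (compact_closure_Om Om_bounded) within_continuousB.
by exists x; [rewrite inE in Ox | move=> y Oy; apply: x_max; rewrite inE].
Qed.

Lemma argmax_outside_Om_eps : (forall x, Om_eps Om GD eps x -> f x <= 0) ->
  exists x, [/\ closure Om x, ~ Om_eps Om GD eps x &
                forall y, closure Om y -> u y - v y <= u x - v x].
Proof.
move=> f_le0; have eps_ge0 := ltW eps_gt0.
have [x0 Ox0 x0_max] := argmax_exists; set M := u x0 - v x0 in x0_max.
set A := [set y | closure Om y /\ u y - v y = M].
have A_closure : A `<=` closure Om by move=> y [].
have A_closed : closed A := closed_within_level M (@closed_closure _ _) within_continuousB.
have [x1 Ax1 x1_max] := EVT_max_rV (ex_intro _ x0 (conj Ox0 erefl))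
  (subclosed_compact A_closed (compact_closure_Om Om_bounded) A_closure)
  (continuous_subspaceW A_closure cu).
rewrite inE in Ax1.
set B := [set y | A y /\ u y = u x1].
suff [x [[[Ox ux] _] Ox_eps]] : exists x, B x /\ ~ Om_eps Om GD eps x.
  by exists x; split=> // y Oy; rewrite ux; exact: x0_max.
apply: contrapT => B_in; have {}B_in x : B x -> Om_eps Om GD eps x.
  by move=> Bx; apply: contrapT => Bx_out; apply: B_in; exists x.
suff B_eq : B = closure Om.
  have [g GDg] := GD_neq0; apply: (not_Om_eps_GD eps_gt0 GDg); apply: B_in.
  by rewrite B_eq; exact: GD_closure.
apply: connected_closure_clopen => //.
- exact: closed_within_level (u x1) A_closed (continuous_subspaceW A_closure cu).
- by exists x1.
- by move=> y [[]].
move=> x [[Ox ux] ux1]; have Ox_eps := B_in x (conj (conj Ox ux) ux1).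
have x_max y : closure Om y -> u y - v y <= u x - v x.
  by move=> Oy; have := x0_max y Oy; lra.
have := nbhs_enorm_le x eps_gt0; apply: filterS => y xy Oy.
have [c xc sup_c] := wsup_attained Om_bounded eps_ge0 cu Ox.
have [_ su_sv _] := max_point_equalities Om_bounded eps_gt0 cu cv sub_super Ox_eps x_max.
have vc := wsup_ge Om_bounded eps_ge0 cv xc; have c_max := x_max c xc.1.
have /x1_max uc_le : c \in A by rewrite inE; split; [exact: xc.1 | lra].
have [uy vy] := max_point_flat Om_bounded eps_gt0 cu cv sub_super
  Ox_eps x_max (f_le0 x Ox_eps) ltac:(lra) y (conj Oy xy).
by split; [split=> //; lra | lra].
Qed.
End NonpositiveRightHandSide.

Theorem lemma4p2 (R : realType) (n : nat) (Om GD : set 'rV[R]_n.+1) (beta eps : R)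
  (u v f ft : 'rV[R]_n.+1 -> R) :
  open Om -> bounded_set Om -> connected Om -> C1_boundary Om ->
  closed GD -> GD `<=` bdry Om -> GD !=set0 ->
  0 < eps ->
  {within closure Om, continuous u} -> {within closure Om, continuous v} ->
  (forall x, Om_eps Om GD eps x ->
     Lop Om eps beta u x <= f x /\ f x <= ft x /\ ft x <= Lop Om eps beta v x) ->
  ((forall x, Om_eps Om GD eps x -> f x < ft x) \/
   (forall x, Om_eps Om GD eps x -> f x <= 0) \/
   (forall x, Om_eps Om GD eps x -> 0 <= ft x)) ->
  sup [set (u x - v x) | x in closure Om] =
  sup [set (u x - v x) | x in closure Om `\` Om_eps Om GD eps].
Proof.
move=> _ Om_bounded Om_connected _ _ GD_bdry GD_neq0 eps_gt0 cu cv sub_super rhs.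
have GD_closure : GD `<=` closure Om by move=> y /GD_bdry [].
suff [x [Ox Ox_eps x_max]] : exists x, [/\ closure Om x, ~ Om_eps Om GD eps x &
    forall y, closure Om y -> u y - v y <= u x - v x].
  rewrite !(@sup_eq_max _ _ (u x - v x)) //; [by exists x | | by exists x |].
  - by move=> _ [y [Oy _] <-]; exact: x_max.
  - by move=> _ [y Oy <-]; exact: x_max.
case: rhs => [f_lt_ft | [f_le0 | ft_ge0]].
- have [x Ox x_max] := argmax_exists Om_bounded GD_closure GD_neq0 cu cv.
  exists x; split=> // Ox_eps.
  have [_ _ f_ft] := max_point_equalities Om_bounded eps_gt0 cu cv sub_super Ox_eps x_max.
  by have := f_lt_ft x Ox_eps; rewrite f_ft ltxx.
- exact: argmax_outside_Om_eps Om_bounded Om_connected GD_closure GD_neq0 eps_gt0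
    cu cv sub_super f_le0.
- have cNv : {within closure Om, continuous (fun y => - v y)}.
    by move=> y; apply: cvgN; exact: cv.
  have cNu : {within closure Om, continuous (fun y => - u y)}.
    by move=> y; apply: cvgN; exact: cu.
  have sub_superN x : Om_eps Om GD eps x ->
      Lop Om eps (- beta) (fun y => - v y) x <= - ft x /\ - ft x <= - f x /\
      - f x <= Lop Om eps (- beta) (fun y => - u y) x.
    by move=> Ox; rewrite !LopN; have := sub_super x Ox; rewrite !lerN2; tauto.
  have Nft_le0 x : Om_eps Om GD eps x -> - ft x <= 0.
    by move=> Ox; rewrite oppr_le0; exact: ft_ge0.
  have [x [Ox Ox_eps x_max]] := argmax_outside_Om_eps Om_bounded Om_connected
    GD_closure GD_neq0 eps_gt0 cNv cNu sub_superN Nft_le0.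
  by exists x; split=> // y Oy; have := x_max y Oy; lra.
Qed.
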